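(* Let $k\ge2$, $n\ge1$ be integers, let $\Xi:=\{\mathbf{z}\in\mathbb{R}^n_+:\mathbf{e}^T\mathbf{z}\ge1\}$ and define $\varphi(\mathbf{z}):=(\mathbf{e}^T\mathbf{z})^{-\frac{k-2}{k-1}}\mathbf{z}$ for $\mathbf{z}\in\Xi$. Then for all $\mathbf{a},\mathbf{b}\in\Xi$, $$\|\varphi(\mathbf{a})-\varphi(\mathbf{b})\|_1\le\frac{2k-3}{k-1}\|\mathbf{a}-\mathbf{b}\|_1.$$
   Context: $\mathbf{e}$ is the all-ones vector in $\mathbb{R}^n$. *)

From HB Require Import structures.
From mathcomp Require Import all_boot all_order all_algebra.
From mathcomp Require Import all_classical all_reals.
From mathcomp Require Import exp.
Set Implicit Arguments. Unset Strict Implicit. Unset Printing Implicit Defensive.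
Import Order.TTheory GRing.Theory Num.Theory.
Local Open Scope ring_scope.

Definition esum (R : realType) (n : nat) (z : 'I_n -> R) : R := \sum_(i < n) z i.

Definition norm1 (R : realType) (n : nat) (z : 'I_n -> R) : R := \sum_(i < n) `|z i|.

Definition inXi (R : realType) (n : nat) (z : 'I_n -> R) : Prop :=
  (forall i, 0 <= z i) /\ 1 <= esum z.

Definition phi (R : realType) (k n : nat) (z : 'I_n -> R) : 'I_n -> R :=
  fun i => powR (esum z) (- ((k%:R - 2) / (k%:R - 1))) * z i.

From HB Require Import structures.
From mathcomp Require Import all_boot all_order all_algebra.
From mathcomp Require Import all_classical all_reals.
From mathcomp Require Import exp.
From mathcomp Require Import ring lra.
Set Implicit Arguments. Unset Strict Implicit. Unset Printing Implicit Defensive.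
Import Order.TTheory GRing.Theory Num.Theory.
Local Open Scope ring_scope.

(* With p := (k-2)/(k-1), phi(z) = s^-p z for s = e^T z, and (2k-3)/(k-1) = 1 + p.
   Assume e^T b = t <= s = e^T a.  Writing s^-p a - t^-p b = s^-p (a - b) - (t^-p - s^-p) b
   gives |phi(a) - phi(b)|_1 <= s^-p |a - b|_1 + t (t^-p - s^-p).  The first term is at
   most |a - b|_1 because s >= 1, and the convexity of x |-> x^-p (in the form of
   Bernoulli's inequality x^-p >= 1 - p (x - 1)) bounds the second by
   p t^-p (s - t) <= p |a - b|_1. *)

Section PowRBounds.
Variable R : realType.
Implicit Types p s t x : R.

Lemma bernoulli_powRN p x : 0 <= p -> 0 < x -> 1 - p * (x - 1) <= x `^ (- p).
Proof.
move=> p0 x0; rewrite /powR gt_eqF //.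
have ln_le : ln x <= x - 1.
  by have := @le_ln1Dx R (x - 1); rewrite addrCA subrr addr0; apply; lra.
apply: le_trans (expR_ge1Dx _); rewrite mulNr lerD2l lerN2.
exact: ler_wpM2l.
Qed.

Lemma powRN_sub_le p s t : 0 <= p -> 0 < t -> 0 < s ->
  t * (t `^ (- p) - s `^ (- p)) <= p * t `^ (- p) * (s - t).
Proof.
move=> p0 t0 s0.
have -> : s = t * (s / t) by rewrite mulrC divfK // gt_eqF.
rewrite powRM ?divr_ge0 ?(ltW t0) ?(ltW s0) //.
have bern := @bernoulli_powRN p (s / t) p0 (divr_gt0 s0 t0).
have -> : t * (t `^ (- p) - t `^ (- p) * (s / t) `^ (- p))
          = t * t `^ (- p) * (1 - (s / t) `^ (- p)) by ring.
have -> : p * t `^ (- p) * (t * (s / t) - t) = t * t `^ (- p) * (p * (s / t - 1)) by ring.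
by rewrite ler_wpM2l ?mulr_ge0 ?powR_ge0 ?(ltW t0) //; lra.
Qed.

Lemma powRN_ge1_le p s t : 0 <= p -> 1 <= t -> t <= s -> s `^ (- p) <= t `^ (- p) <= 1.
Proof.
move=> p0 t1 ts; have tp1 : 1 <= t `^ p by rewrite -(powRr0 t) ler_powR.
have tsp : t `^ p <= s `^ p by rewrite ge0_ler_powR ?nnegrE //; lra.
have tp0 : 0 < t `^ p by apply: lt_le_trans tp1.
rewrite !powRN invf_le1 // tp1 andbT lef_pV2 // posrE.
exact: lt_le_trans tsp.
Qed.

End PowRBounds.

Section Norm1.
Variables (R : realType) (n : nat).
Implicit Types a b : 'I_n -> R.

Lemma norm1_subC a b : norm1 (fun i => a i - b i) = norm1 (fun i => b i - a i).
Proof. by apply: eq_bigr => i _; rewrite distrC. Qed.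

Lemma esum_sub_le_norm1 a b : esum a - esum b <= norm1 (fun i => a i - b i).
Proof. by rewrite /esum /norm1 -sumrB; apply: ler_sum => i _; apply: ler_norm. Qed.

Lemma norm1_scale_sub_le (A B : R) a b : 0 <= A -> A <= B -> (forall i, 0 <= b i) ->
  norm1 (fun i => A * a i - B * b i)
    <= A * norm1 (fun i => a i - b i) + (B - A) * esum b.
Proof.
move=> A0 AB b0; rewrite /norm1 /esum !mulr_sumr -big_split /=.
apply: ler_sum => i _.
have -> : A * a i - B * b i = A * (a i - b i) - (B - A) * b i by ring.
apply: le_trans (ler_normB _ _) _.
by rewrite !normrM (ger0_norm A0) (ger0_norm (b0 i)) [`|B - A|]ger0_norm ?subr_ge0.
Qed.

Lemma scale_esum_powRN_lipschitz (p : R) a b : 0 <= p -> inXi a -> inXi b ->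
  norm1 (fun i => esum a `^ (- p) * a i - esum b `^ (- p) * b i)
    <= (1 + p) * norm1 (fun i => a i - b i).
Proof.
move=> p0; wlog ts : a b / esum b <= esum a.
  move=> wlog_ts ha hb; have [ts|st] := lerP (esum b) (esum a); first exact: wlog_ts.
  by rewrite norm1_subC [X in X <= _]norm1_subC; apply: wlog_ts (ltW st) hb ha.
move=> _ [b0 t1].
set s := esum a in ts *; set t := esum b in t1 ts *.
set N := norm1 (fun i => a i - b i).
have /andP[AB B1] := powRN_ge1_le p0 t1 ts.
have A0 : 0 <= s `^ (- p) by apply: powR_ge0.
have N0 : 0 <= N by apply: sumr_ge0 => i _.
have scaled_diff : s `^ (- p) * N <= N by rewrite ler_piMl // (le_trans AB B1).
have sum_gap : (t `^ (- p) - s `^ (- p)) * t <= p * N.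
  have t0 : 0 < t by apply: lt_le_trans t1.
  rewrite mulrC; apply: le_trans (powRN_sub_le p0 t0 (lt_le_trans t0 ts)) _.
  rewrite -mulrA ler_wpM2l //; apply: le_trans (esum_sub_le_norm1 a b).
  by rewrite ler_piMl ?subr_ge0.
have := norm1_scale_sub_le a A0 AB b0; rewrite -/t -/N => split_bound.
lra.
Qed.

End Norm1.

Theorem lemma3p9 (R : realType) (k n : nat) (hk : (2 <= k)%N) (hn : (1 <= n)%N)
  (a b : 'I_n -> R) (ha : inXi a) (hb : inXi b) :
  norm1 (fun i => phi k a i - phi k b i)
    <= (2 * k%:R - 3) / (k%:R - 1) * norm1 (fun i => a i - b i).
Proof.
have k2 : 2 <= k%:R :> R by rewrite (ler_nat R 2 k).
have p0 : 0 <= (k%:R - 2) / (k%:R - 1) :> R by rewrite divr_ge0 //; lra.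
have -> : (2 * k%:R - 3) / (k%:R - 1) = 1 + (k%:R - 2) / (k%:R - 1) :> R.
  by field; rewrite gt_eqF //; lra.
exact: scale_esum_powRN_lipschitz.
Qed.
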